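(* For every integer $d\ge2$ and every $q\ne0$ there exists $\Lambda_0=\Lambda_0(q,d)>0$ with the following property. Let $(X,Y,Z,W)$ be a solution of system (S) on $(-\infty,t_{max})$ satisfying: (i) $Y,W>0$; (ii) $\lim_{t\to-\infty}(X,Y,Z,W)(t)=(0,0,1,0)$; (iii) $\mathcal C>0$; (iv) $\lim_{t\to-\infty}W/Y^2=1$; (v) $\mathcal C\lambda^2\ge\Lambda_0$, where $g$ is normalized with $\lambda=\lim_{t\to-\infty}g(t)>0$. Then $$\frac{W(t)^2}{Y(t)^2}\le\frac{A_2}{A_3(d+2)}\qquad\text{for all }t\in(-\infty,t_{max}).$$
   Context: Put $A_2=d(d+2)$ and $A_3=\tfrac14d(d+2)^2q^2$. System (S) is $$X'=X(dX^2+Z^2-1)+\tfrac{A_2}{d}Y^2-2\tfrac{A_3}{d}W^2,\qquad Y'=Y(dX^2+Z^2-X),$$ $$Z'=Z(dX^2+Z^2-1)+A_3W^2,\qquad W'=W(dX^2+Z^2-2X+Z).$$ $g$ is a positive solution of $g'=gX$, and $\mathcal L=gY$. The first integral is $dX^2+A_2Y^2+Z^2-A_3W^2=1-\mathcal C\mathcal L^2$ with $\mathcal C$ constant. Under (i)–(iii), $\lambda=\lim_{t\to-\infty}g(t)$ exists, and fixing it fixes $g$ and hence $\mathcal C$; the product $\mathcal C\lambda^2$ is independent of this choice. *)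

From Stdlib Require Import Reals.
Open Scope R_scope.

(* Right endpoint of the maximal interval (-oo, t_max); None encodes t_max = +oo. *)
Definition in_dom (tmax : option R) (t : R) : Prop :=
  match tmax with Some T => t < T | None => True end.

Definition lim_minfty (tmax : option R) (f : R -> R) (l : R) : Prop :=
  forall eps : R, 0 < eps ->
    exists M : R, forall t : R, t < M -> in_dom tmax t -> Rabs (f t - l) < eps.

Definition A2 (d : nat) : R := INR d * (INR d + 2).
Definition A3 (d q : R) : R := / 4 * d * (d + 2) ^ 2 * q ^ 2.

Definition solves_S (d : nat) (q : R) (tmax : option R) (X Y Z W : R -> R) : Prop :=
  forall t, in_dom tmax t ->
    let dd := INR d in
    let a2 := A2 d in
    let a3 := A3 dd q in
    derivable_pt_lim X t
      (X t * (dd * X t ^ 2 + Z t ^ 2 - 1) + a2 / dd * Y t ^ 2 - 2 * (a3 / dd) * W t ^ 2) /\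
    derivable_pt_lim Y t (Y t * (dd * X t ^ 2 + Z t ^ 2 - X t)) /\
    derivable_pt_lim Z t (Z t * (dd * X t ^ 2 + Z t ^ 2 - 1) + a3 * W t ^ 2) /\
    derivable_pt_lim W t (W t * (dd * X t ^ 2 + Z t ^ 2 - 2 * X t + Z t)).

From Stdlib Require Import Reals Lra Psatz Classical.
Open Scope R_scope.

(** With [F := (d+2) A3 W^2 - A2 Y^2] the claim is [F <= 0]. Hypothesis (iv) gives [F < 0] near
    [-oo], so if the claim fails there is a first time [t0] with [F t0 = 0]. Up to [t0] the first
    integral bounds [P := d X^2 + Z^2] by [1 - C L^2]; this keeps [X >= 0] (so [g] increases,
    [g >= lambda] and [C L^2 >= C lambda^2 Y^2]) and, looking back from [t0], [Z >= X].
    While [C L^2 <= 1/4] the ratio [W/Y^2] stays below [4]; afterwards [W/Y] can grow at most by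
    a factor [e^4] until [t0]. Hence [(W/Y)(t0)^2 <= 16 e^8 Y(t1)^2 <= 4 e^8 / (C lambda^2)] at
    the switching time [t1], whereas [F t0 = 0] means [(W/Y)(t0)^2 = A2 / ((d+2) A3)]: impossible
    once [C lambda^2 >= Lambda0]. *)

Lemma exp_le x y : x <= y -> exp x <= exp y.
Proof. intros Hxy; apply Rnot_lt_le; intros H; apply exp_lt_inv in H; lra. Qed.

Lemma derivable_pt_lim_eq_val f x l l' :
  derivable_pt_lim f x l -> l = l' -> derivable_pt_lim f x l'.
Proof. now intros H <-. Qed.

Lemma derivable_pt_lim_sqr f x l :
  derivable_pt_lim f x l -> derivable_pt_lim (fun t => f t ^ 2) x (2 * f x * l).
Proof.
  intros H; eapply derivable_pt_lim_eq_val.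
  - apply (derivable_pt_lim_mult f (fun t => f t * 1)); [exact H|].
    apply (derivable_pt_lim_mult f (fun _ => 1)); [exact H|apply derivable_pt_lim_const].
  - ring.
Qed.

Lemma derivable_pt_lim_exp_comp f x l :
  derivable_pt_lim f x l -> derivable_pt_lim (fun t => exp (f t)) x (exp (f x) * l).
Proof. intros H; apply (derivable_pt_lim_comp f exp); [exact H|apply derivable_pt_lim_exp]. Qed.

Lemma derivable_pt_lim_continuity_pt f x l : derivable_pt_lim f x l -> continuity_pt f x.
Proof. intros H; apply derivable_continuous_pt; now exists l. Qed.

Ltac derive :=
  repeat first
    [ eassumption
    | apply derivable_pt_lim_const
    | apply derivable_pt_lim_sqr
    | apply derivable_pt_lim_exp_comp
    | apply derivable_pt_lim_div
    | apply derivable_pt_lim_mult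
    | apply derivable_pt_lim_minus
    | apply derivable_pt_lim_plus
    | apply derivable_pt_lim_opp ].

Lemma nondecreasing_of_deriv_nonneg f f' a b : a <= b ->
  (forall x, a <= x <= b -> derivable_pt_lim f x (f' x)) ->
  (forall x, a <= x <= b -> 0 <= f' x) -> f a <= f b.
Proof.
  intros Hab Hd Hpos; destruct (Req_dec a b) as [->|Hne]; [lra|].
  destruct (MVT_cor2 f f' a b) as [c [E Hc]]; [lra|exact Hd|].
  specialize (Hpos c ltac:(lra)); nra.
Qed.

Lemma nonincreasing_of_deriv_nonpos f f' a b : a <= b ->
  (forall x, a <= x <= b -> derivable_pt_lim f x (f' x)) ->
  (forall x, a <= x <= b -> f' x <= 0) -> f b <= f a.
Proof.
  intros Hab Hd Hneg; destruct (Req_dec a b) as [->|Hne]; [lra|].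
  destruct (MVT_cor2 f f' a b) as [c [E Hc]]; [lra|exact Hd|].
  specialize (Hneg c ltac:(lra)); nra.
Qed.

Lemma deriv_nonneg_of_left_max f p l del : 0 < del ->
  (forall h, 0 < h < del -> f (p - h) <= f p) ->
  derivable_pt_lim f p l -> 0 <= l.
Proof.
  intros Hdel Hmax Hd; apply Rnot_lt_le; intros Hl.
  destruct (Hd (- l / 2)) as [eta Heta]; [lra|].
  pose proof (cond_pos eta) as Heta0.
  set (h := Rmin (del / 2) (eta / 2)).
  assert (Hh : 0 < h) by (apply Rmin_glb_lt; lra).
  assert (h <= del / 2) by apply Rmin_l.
  assert (h <= eta / 2) by apply Rmin_r.
  specialize (Heta (- h) ltac:(lra) ltac:(rewrite Rabs_left; lra)).
  specialize (Hmax h ltac:(lra)).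
  replace (p + - h) with (p - h) in Heta by ring.
  apply Rabs_def2 in Heta; destruct Heta as [Hq _].
  assert (Hdiff : 0 < f (p - h) - f p); [|lra].
  replace (f (p - h) - f p) with (- ((f (p - h) - f p) / - h) * h) by (field; lra).
  apply Rmult_lt_0_compat; lra.
Qed.

Lemma deriv_nonpos_of_left_min f p l del : 0 < del ->
  (forall h, 0 < h < del -> f p <= f (p - h)) ->
  derivable_pt_lim f p l -> l <= 0.
Proof.
  intros Hdel Hmin Hd.
  enough (0 <= - l) by lra.
  apply (deriv_nonneg_of_left_max (- f)%F p (- l) del Hdel).
  - intros h Hh; unfold opp_fct; specialize (Hmin h Hh); lra.
  - now apply derivable_pt_lim_opp.
Qed.

Lemma le_of_deriv_pos_on_sublevel f f' a b : a <= b ->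
  (forall x, a <= x <= b -> derivable_pt_lim f x (f' x)) ->
  (forall x, a < x <= b -> f x <= f b -> 0 < f' x) -> f a <= f b.
Proof.
  intros Hab Hd Hrise; apply Rnot_lt_le; intros Hba.
  destruct (continuity_ab_min f a b Hab) as [m [Hm Hmab]].
  { intros x Hx; apply (derivable_pt_lim_continuity_pt _ _ (f' x)), Hd; lra. }
  assert (Hmb : f m <= f b) by (apply Hm; lra).
  assert (Ham : a < m) by (destruct (Req_dec a m) as [<-|]; lra).
  assert (f' m <= 0); [|specialize (Hrise m ltac:(lra) Hmb); lra].
  apply (deriv_nonpos_of_left_min f m (f' m) (m - a)); [lra| |now apply Hd].
  intros h Hh; apply Hm; lra.
Qed.

Lemma continuity_pt_pos_near f p : continuity_pt f p -> 0 < f p ->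
  exists del, 0 < del /\ forall x, Rabs (x - p) < del -> 0 < f x.
Proof.
  intros Hc Hp; destruct (Hc (f p / 2)) as [del [Hdel Hnear]]; [lra|].
  exists del; split; [lra|]; intros x Hx.
  destruct (Req_dec x p) as [->|Hne]; [lra|].
  specialize (Hnear x (conj (conj I (not_eq_sym Hne)) Hx)); simpl in Hnear.
  unfold R_dist in Hnear; apply Rabs_def2 in Hnear; lra.
Qed.

Lemma first_zero_crossing f a b : a < b ->
  (forall x, a <= x <= b -> continuity_pt f x) -> f a < 0 -> 0 <= f b ->
  exists p, a < p <= b /\ f p = 0 /\ forall x, a <= x < p -> f x < 0.
Proof.
  intros Hab Hc Ha Hb.
  set (E := fun x => a <= x <= b /\ forall y, a <= y <= x -> f y < 0).
  assert (EA : E a) by (split; [lra|intros y Hy; replace y with a by lra; exact Ha]).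
  destruct (completeness E) as [p [Hub Hlub]].
  { exists b; intros x [Hx _]; lra. }
  { now exists a. }
  assert (Hap : a <= p) by now apply Hub.
  assert (Hpb : p <= b) by (apply Hlub; intros x [Hx _]; lra).
  assert (Hbelow : forall x, a <= x < p -> f x < 0).
  { intros x Hx; apply NNPP; intros Hfx.
    assert (p <= x); [|lra].
    apply Hlub; intros y [Hy Hneg]; apply Rnot_lt_le; intros Hxy.
    apply Hfx, Hneg; lra. }
  assert (Hp0 : f p <= 0).
  { apply Rnot_lt_le; intros Hpos.
    destruct (continuity_pt_pos_near f p (Hc p ltac:(lra)) Hpos) as [del [Hdel Hnear]].
    destruct (Req_dec a p) as [<-|Hne]; [lra|].
    set (x := Rmax a (p - del / 2)).
    assert (a <= x) by apply Rmax_l; assert (p - del / 2 <= x) by apply Rmax_r.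
    assert (x < p) by (apply Rmax_lub_lt; lra).
    assert (0 < f x) by (apply Hnear; rewrite Rabs_left; lra).
    specialize (Hbelow x ltac:(lra)); lra. }
  assert (Hp1 : 0 <= f p).
  { apply Rnot_lt_le; intros Hneg.
    destruct (continuity_pt_pos_near (- f)%F p (continuity_pt_opp f p (Hc p ltac:(lra))))
      as [del [Hdel Hnear]]; [unfold opp_fct; lra|].
    destruct (Req_dec p b) as [->|Hne]; [lra|].
    set (x := Rmin b (p + del / 2)).
    assert (x <= b) by apply Rmin_l; assert (x <= p + del / 2) by apply Rmin_r.
    assert (p < x) by (apply Rmin_glb_lt; lra).
    enough (E x) by (specialize (Hub x ltac:(assumption)); lra).
    split; [lra|]; intros y Hy.
    destruct (Rlt_le_dec y p); [apply Hbelow; lra|].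
    assert (Hy' : 0 < (- f)%F y) by (apply Hnear; rewrite Rabs_right; lra).
    unfold opp_fct in Hy'; lra. }
  exists p; split; [split; [destruct (Req_dec a p) as [<-|]; lra|lra]|split; [lra|exact Hbelow]].
Qed.

(* Multiplying by [exp] turns [f' + f <= 0] into monotonicity of [f exp]. *)
Lemma nonneg_of_deriv_add_nonpos f f' a b : a <= b ->
  (forall x, a <= x <= b -> derivable_pt_lim f x (f' x)) ->
  (forall x, a <= x <= b -> f x <= 0 -> f' x + f x <= 0) ->
  0 <= f b -> 0 <= f a.
Proof.
  intros Hab Hd Hdec Hb; apply Rnot_lt_le; intros Ha.
  destruct (Req_dec a b) as [->|Hne]; [lra|].
  destruct (first_zero_crossing f a b) as [p [Hp [Hp0 Hneg]]]; try lra.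
  { intros x Hx; apply (derivable_pt_lim_continuity_pt _ _ (f' x)), Hd; lra. }
  assert (Hmono : f p * exp p <= f a * exp a).
  { apply (nonincreasing_of_deriv_nonpos (fun x => f x * exp x)
             (fun x => (f' x + f x) * exp x)); [lra| |].
    - intros x Hx; eapply derivable_pt_lim_eq_val;
        [apply derivable_pt_lim_mult; [apply Hd; lra|apply derivable_pt_lim_exp]|ring].
    - intros x Hx; pose proof (exp_pos x).
      assert (f x <= 0) by (destruct (Req_dec x p) as [->|]; [lra|left; apply Hneg; lra]).
      specialize (Hdec x ltac:(lra) ltac:(assumption)); nra. }
  rewrite Hp0 in Hmono; pose proof (exp_pos a); nra.
Qed.

Lemma in_dom_le tmax s t : in_dom tmax t -> s <= t -> in_dom tmax s.
Proof. destruct tmax; simpl; lra. Qed.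

Lemma lim_minfty_below tmax f l t : lim_minfty tmax f l -> in_dom tmax t ->
  forall e, 0 < e -> exists M, M <= t /\ forall s, s < M -> Rabs (f s - l) < e.
Proof.
  intros Hlim Ht e He; destruct (Hlim e He) as [M HM].
  exists (Rmin M t); split; [apply Rmin_r|]; intros s Hs.
  assert (Rmin M t <= M) by apply Rmin_l; assert (Rmin M t <= t) by apply Rmin_r.
  apply HM; [lra|apply (in_dom_le tmax s t); [exact Ht|lra]].
Qed.

Lemma lim_minfty_le tmax f l t c : lim_minfty tmax f l -> in_dom tmax t ->
  (forall s, s < t -> f s <= c) -> l <= c.
Proof.
  intros Hlim Ht Hle; apply Rnot_lt_le; intros Hcl.
  destruct (lim_minfty_below tmax f l t Hlim Ht (l - c)) as [M [HMt HM]]; [lra|].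
  specialize (HM (M - 1) ltac:(lra)); specialize (Hle (M - 1) ltac:(lra)).
  apply Rabs_def2 in HM; lra.
Qed.

Lemma le_lim_minfty tmax f l t c : lim_minfty tmax f l -> in_dom tmax t ->
  (forall s, s < t -> c <= f s) -> c <= l.
Proof.
  intros Hlim Ht Hle; apply Rnot_lt_le; intros Hcl.
  destruct (lim_minfty_below tmax f l t Hlim Ht (c - l)) as [M [HMt HM]]; [lra|].
  specialize (HM (M - 1) ltac:(lra)); specialize (Hle (M - 1) ltac:(lra)).
  apply Rabs_def2 in HM; lra.
Qed.

(* [4 exp 8] is the [16 exp 8] of the bound on [(W/Y)(t0)^2] times the switching level [1/4]. *)
Definition Lambda0 (dd a2 a3 : R) : R := a2 + 4 * exp 8 * (a3 * (dd + 2)) / a2.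

Lemma a2_le_Lambda0 dd a2 a3 : 0 < a2 -> 0 <= a3 * (dd + 2) -> a2 <= Lambda0 dd a2 a3.
Proof.
  intros Ha2 Ha3; unfold Lambda0; pose proof (exp_pos 8).
  assert (0 <= 4 * exp 8 * (a3 * (dd + 2)) / a2) by (apply Rle_mult_inv_pos; nra).
  lra.
Qed.

Lemma mul_gt_of_Lambda0_le dd a2 a3 L : 0 < a2 -> Lambda0 dd a2 a3 <= L ->
  4 * exp 8 * (a3 * (dd + 2)) < a2 * L.
Proof.
  intros Ha2 HL; unfold Lambda0 in HL.
  apply (Rmult_le_compat_l a2) in HL; [|lra].
  replace (a2 * (a2 + 4 * exp 8 * (a3 * (dd + 2)) / a2))
    with (a2 * a2 + 4 * exp 8 * (a3 * (dd + 2))) in HL by (field; lra).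
  nra.
Qed.

Section System.

Variables (dd a2 a3 C lambda : R) (tmax : option R) (X Y Z W g : R -> R).
Hypotheses (Hdd : 2 <= dd) (Ha2 : 0 < a2) (Ha3 : 0 < a3) (HC : 0 < C).

Definition P (s : R) : R := dd * X s ^ 2 + Z s ^ 2.
Definition CL2 (s : R) : R := C * (g s * Y s) ^ 2.
Definition F (s : R) : R := (dd + 2) * a3 * W s ^ 2 - a2 * Y s ^ 2.
Definition V (s : R) : R := Z s - X s.

Hypothesis HX' : forall s, in_dom tmax s ->
  derivable_pt_lim X s (X s * (P s - 1) + a2 / dd * Y s ^ 2 - 2 * (a3 / dd) * W s ^ 2).
Hypothesis HY' : forall s, in_dom tmax s -> derivable_pt_lim Y s (Y s * (P s - X s)).
Hypothesis HZ' : forall s, in_dom tmax s ->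
  derivable_pt_lim Z s (Z s * (P s - 1) + a3 * W s ^ 2).
Hypothesis HW' : forall s, in_dom tmax s ->
  derivable_pt_lim W s (W s * (P s - 2 * X s + Z s)).
Hypothesis Hg' : forall s, in_dom tmax s -> derivable_pt_lim g s (g s * X s).
Hypothesis Hg_pos : forall s, in_dom tmax s -> 0 < g s.
Hypothesis HY_pos : forall s, in_dom tmax s -> 0 < Y s.
Hypothesis HW_pos : forall s, in_dom tmax s -> 0 < W s.
Hypothesis Hfirst_integral : forall s, in_dom tmax s ->
  dd * X s ^ 2 + a2 * Y s ^ 2 + Z s ^ 2 - a3 * W s ^ 2 = 1 - CL2 s.
Hypothesis HlimX : lim_minfty tmax X 0.
Hypothesis HlimY : lim_minfty tmax Y 0.
Hypothesis Hlim_ratio : lim_minfty tmax (fun s => W s / Y s ^ 2) 1.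
Hypothesis Hlimg : lim_minfty tmax g lambda.
Hypothesis HLambda : Lambda0 dd a2 a3 <= C * lambda ^ 2.

Lemma P_nonneg s : 0 <= P s.
Proof. unfold P; pose proof (pow2_ge_0 (X s)); pose proof (pow2_ge_0 (Z s)); nra. Qed.

Lemma CL2_nonneg s : 0 <= CL2 s.
Proof. unfold CL2; pose proof (pow2_ge_0 (g s * Y s)); nra. Qed.

Lemma ratio_pos s : in_dom tmax s -> 0 < W s / Y s ^ 2.
Proof.
  intros Hs; apply Rdiv_lt_0_compat; [apply HW_pos, Hs|apply pow_lt, HY_pos, Hs].
Qed.

Lemma WY_pos s : in_dom tmax s -> 0 < W s / Y s.
Proof. intros Hs; apply Rdiv_lt_0_compat; [apply HW_pos, Hs|apply HY_pos, Hs]. Qed.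

Lemma CL2_deriv s : in_dom tmax s -> derivable_pt_lim CL2 s (2 * CL2 s * P s).
Proof.
  intros Hs; pose proof (Hg' s Hs); pose proof (HY' s Hs).
  unfold CL2; eapply derivable_pt_lim_eq_val; [derive|unfold P; ring].
Qed.

Lemma F_deriv s : in_dom tmax s ->
  derivable_pt_lim F s (2 * (P s - X s) * F s + 2 * (dd + 2) * a3 * W s ^ 2 * V s).
Proof.
  intros Hs; pose proof (HY' s Hs); pose proof (HW' s Hs).
  unfold F; eapply derivable_pt_lim_eq_val; [derive|unfold V; ring].
Qed.

Lemma V_deriv s : in_dom tmax s -> derivable_pt_lim V s (V s * (P s - 1) + F s / dd).
Proof.
  intros Hs; pose proof (HX' s Hs); pose proof (HZ' s Hs).
  unfold V; eapply derivable_pt_lim_eq_val; [derive|unfold F; field; lra].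
Qed.

Lemma ratio_deriv s : in_dom tmax s ->
  derivable_pt_lim (fun s => W s / Y s ^ 2) s (W s / Y s ^ 2 * (Z s - P s)).
Proof.
  intros Hs; pose proof (HY' s Hs); pose proof (HW' s Hs); pose proof (HY_pos s Hs).
  eapply derivable_pt_lim_eq_val; [derive|unfold Rsqr; field; lra].
  apply pow_nonzero; lra.
Qed.

Lemma WY_deriv s : in_dom tmax s ->
  derivable_pt_lim (fun s => W s / Y s) s (W s / Y s * V s).
Proof.
  intros Hs; pose proof (HY' s Hs); pose proof (HW' s Hs); pose proof (HY_pos s Hs).
  eapply derivable_pt_lim_eq_val; [derive|unfold V, Rsqr; field]; lra.
Qed.

(* Near [-oo], [W ~ Y^2] makes [F ~ - a2 Y^2]. *)
Lemma F_neg_eventually t : in_dom tmax t -> exists M, M <= t /\ forall s, s < M -> F s < 0.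
Proof.
  intros Ht.
  set (del := Rmin 1 (a2 / (4 * (dd + 2) * a3))).
  assert (Hdel0 : 0 < del) by (apply Rmin_glb_lt; [lra|apply Rdiv_lt_0_compat; nra]).
  assert (Hdel1 : del <= 1) by apply Rmin_l.
  assert (Hdel2 : 4 * (dd + 2) * a3 * del <= a2).
  { assert (Hle : del <= a2 / (4 * (dd + 2) * a3)) by apply Rmin_r.
    apply (Rmult_le_compat_l (4 * (dd + 2) * a3)) in Hle; [|nra].
    replace (4 * (dd + 2) * a3 * (a2 / (4 * (dd + 2) * a3))) with a2 in Hle by (field; lra).
    exact Hle. }
  destruct (lim_minfty_below tmax _ _ t Hlim_ratio Ht 1) as [M1 [HM1t HM1]]; [lra|].
  destruct (lim_minfty_below tmax _ _ t HlimY Ht del Hdel0) as [M2 [HM2t HM2]].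
  exists (Rmin M1 M2); split; [apply Rle_trans with M1; [apply Rmin_l|exact HM1t]|].
  intros s Hs.
  assert (Rmin M1 M2 <= M1) by apply Rmin_l; assert (Rmin M1 M2 <= M2) by apply Rmin_r.
  assert (Hds : in_dom tmax s) by (apply (in_dom_le tmax s t); [exact Ht|lra]).
  pose proof (HY_pos s Hds); pose proof (HW_pos s Hds).
  specialize (HM1 s ltac:(lra)); specialize (HM2 s ltac:(lra)).
  apply Rabs_def2 in HM1; apply Rabs_def2 in HM2.
  assert (HY2 : 0 < Y s ^ 2) by (apply pow_lt; lra).
  assert (HY2del : Y s ^ 2 < del) by nra.
  set (r := W s / Y s ^ 2) in HM1.
  assert (HWr : W s = r * Y s ^ 2) by (unfold r; field; lra).
  assert (Hr2 : r ^ 2 < 4) by nra.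
  unfold F; rewrite HWr.
  replace ((dd + 2) * a3 * (r * Y s ^ 2) ^ 2 - a2 * Y s ^ 2)
    with (Y s ^ 2 * ((dd + 2) * a3 * r ^ 2 * Y s ^ 2 - a2)) by ring.
  assert ((dd + 2) * a3 * r ^ 2 * Y s ^ 2 < 4 * (dd + 2) * a3 * del).
  { assert (Hk : 0 < (dd + 2) * a3) by nra.
    assert ((dd + 2) * a3 * r ^ 2 * Y s ^ 2 <= 4 * ((dd + 2) * a3) * Y s ^ 2).
    { apply Rmult_le_compat_r; [lra|]. rewrite (Rmult_comm 4). apply Rmult_le_compat_l; lra. }
    nra. }
  nra.
Qed.

Section Before_first_crossing.

Variable t0 : R.
Hypotheses (Ht0 : in_dom tmax t0) (HF : forall s, s <= t0 -> F s <= 0) (HF0 : F t0 = 0).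

Lemma in_dom_before s : s <= t0 -> in_dom tmax s.
Proof. intros Hs; exact (in_dom_le tmax s t0 Ht0 Hs). Qed.

Lemma a3W2_le s : s <= t0 -> (dd + 2) * (a3 * W s ^ 2) <= a2 * Y s ^ 2.
Proof. intros Hs; specialize (HF s Hs); unfold F in HF; lra. Qed.

Lemma CL2_le_one_sub_P s : s <= t0 -> CL2 s <= 1 - P s.
Proof.
  intros Hs; pose proof (a3W2_le s Hs); pose proof (Hfirst_integral s (in_dom_before s Hs)).
  assert (0 <= a3 * W s ^ 2) by (pose proof (pow2_ge_0 (W s)); nra).
  unfold P; nra.
Qed.

Lemma Z_le_one s : s <= t0 -> Z s <= 1.
Proof.
  intros Hs; pose proof (CL2_le_one_sub_P s Hs); pose proof (CL2_nonneg s).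
  unfold P in *; pose proof (pow2_ge_0 (X s)); nra.
Qed.

Lemma X_nonneg s : s <= t0 -> 0 <= X s.
Proof.
  intros Hs; destruct (Rle_lt_dec 0 (X s)) as [|Hneg]; [assumption|].
  apply (lim_minfty_le tmax X 0 s); [exact HlimX|now apply in_dom_before|].
  intros s' Hs'.
  apply (le_of_deriv_pos_on_sublevel X
           (fun x => X x * (P x - 1) + a2 / dd * Y x ^ 2 - 2 * (a3 / dd) * W x ^ 2) s' s);
    [lra|intros x Hx; apply HX', in_dom_before; lra|].
  intros x Hx HXx.
  assert (Hxt : x <= t0) by lra; pose proof (in_dom_before x Hxt) as Hdx.
  pose proof (a3W2_le x Hxt); pose proof (CL2_le_one_sub_P x Hxt); pose proof (CL2_nonneg x).
  pose proof (HY_pos x Hdx).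
  assert (Hlin : 0 < a2 / dd * Y x ^ 2 - 2 * (a3 / dd) * W x ^ 2).
  { replace (a2 / dd * Y x ^ 2 - 2 * (a3 / dd) * W x ^ 2)
      with ((a2 * Y x ^ 2 - 2 * (a3 * W x ^ 2)) / dd) by (field; lra).
    apply Rdiv_lt_0_compat; [|lra].
    assert (0 < a2 * Y x ^ 2) by (apply Rmult_lt_0_compat; [lra|apply pow_lt; lra]).
    nra. }
  nra.
Qed.

Lemma g_nondecreasing s t : s <= t -> t <= t0 -> g s <= g t.
Proof.
  intros Hst Ht; apply (nondecreasing_of_deriv_nonneg g (fun x => g x * X x)); [lra| |].
  - intros x Hx; apply Hg', in_dom_before; lra.
  - intros x Hx; pose proof (Hg_pos x (in_dom_before x ltac:(lra))).
    pose proof (X_nonneg x ltac:(lra)); nra.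
Qed.

Lemma lambda_nonneg : 0 <= lambda.
Proof.
  apply (le_lim_minfty tmax g lambda t0); [exact Hlimg|exact Ht0|].
  intros s Hs; left; apply Hg_pos, in_dom_before; lra.
Qed.

Lemma lambda_le_g s : s <= t0 -> lambda <= g s.
Proof.
  intros Hs; apply (lim_minfty_le tmax g lambda s); [exact Hlimg|now apply in_dom_before|].
  intros s' Hs'; apply g_nondecreasing; lra.
Qed.

Lemma CL2_ge s : s <= t0 -> C * lambda ^ 2 * Y s ^ 2 <= CL2 s.
Proof.
  intros Hs; pose proof (lambda_le_g s Hs); pose proof lambda_nonneg.
  assert (lambda ^ 2 <= g s ^ 2) by (apply pow_incr; lra).
  assert (C * lambda ^ 2 <= C * g s ^ 2) by (apply Rmult_le_compat_l; lra).
  unfold CL2; pose proof (pow2_ge_0 (Y s)); nra.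
Qed.

Lemma a2Y2_le_CL2 s : s <= t0 -> a2 * Y s ^ 2 <= CL2 s.
Proof.
  intros Hs; pose proof (CL2_ge s Hs); pose proof (a2_le_Lambda0 dd a2 a3 Ha2 ltac:(nra)).
  pose proof (pow2_ge_0 (Y s)); nra.
Qed.

Lemma one_sub_P_le s : s <= t0 -> 1 - P s <= 2 * CL2 s.
Proof.
  intros Hs; pose proof (Hfirst_integral s (in_dom_before s Hs)); pose proof (a2Y2_le_CL2 s Hs).
  assert (0 <= a3 * W s ^ 2) by (pose proof (pow2_ge_0 (W s)); nra).
  unfold P; lra.
Qed.

Lemma CL2_nondecreasing s t : s <= t -> t <= t0 -> CL2 s <= CL2 t.
Proof.
  intros Hst Ht; apply (nondecreasing_of_deriv_nonneg CL2 (fun x => 2 * CL2 x * P x)); [lra| |].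
  - intros x Hx; apply CL2_deriv, in_dom_before; lra.
  - intros x _; pose proof (CL2_nonneg x); pose proof (P_nonneg x); nra.
Qed.

(* Fermat's rule at the first crossing [t0] of [F]. *)
Lemma V_nonneg_at_t0 : 0 <= V t0.
Proof.
  assert (Hd := deriv_nonneg_of_left_max F t0 _ 1 ltac:(lra)
                  ltac:(intros h Hh; rewrite HF0; apply HF; lra) (F_deriv t0 Ht0)).
  rewrite HF0 in Hd; pose proof (HW_pos t0 Ht0).
  assert (0 < 2 * (dd + 2) * a3 * W t0 ^ 2)
    by (repeat apply Rmult_lt_0_compat; try apply pow_lt; lra).
  nra.
Qed.

Lemma V_nonneg s : s <= t0 -> 0 <= V s.
Proof.
  intros Hs; apply (nonneg_of_deriv_add_nonpos V (fun x => V x * (P x - 1) + F x / dd) s t0);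
    [exact Hs|intros x Hx; apply V_deriv, in_dom_before; lra| |exact V_nonneg_at_t0].
  intros x Hx HVx; pose proof (P_nonneg x); specialize (HF x ltac:(lra)).
  assert (0 < / dd) by (apply Rinv_0_lt_compat; lra).
  assert (F x / dd <= 0) by (unfold Rdiv; nra).
  nra.
Qed.

(* While [CL2 <= 1/4], [W / Y^2 * (1 - 3 CL2)] is nonincreasing and below [W / Y^2],
   which tends to 1. *)
Lemma ratio_le_4 t1 : t1 <= t0 -> (forall s, s <= t1 -> CL2 s <= 1 / 4) ->
  W t1 / Y t1 ^ 2 <= 4.
Proof.
  intros Ht1 Hsmall.
  set (Psi := fun s => W s / Y s ^ 2 * (1 - 3 * CL2 s)).
  assert (Hdecr : forall s, s <= t1 -> Psi t1 <= Psi s).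
  { intros s Hs; apply (nonincreasing_of_deriv_nonpos Psi
      (fun x => W x / Y x ^ 2 * ((Z x - P x) * (1 - 3 * CL2 x) - 6 * CL2 x * P x)));
      [exact Hs| |].
    - intros x Hx; pose proof (ratio_deriv x (in_dom_before x ltac:(lra))).
      pose proof (CL2_deriv x (in_dom_before x ltac:(lra))).
      unfold Psi; eapply derivable_pt_lim_eq_val; [derive|cbv beta; ring].
    - intros x Hx; assert (Hxt : x <= t0) by lra; pose proof (in_dom_before x Hxt) as Hdx.
      pose proof (ratio_pos x Hdx).
      pose proof (Hsmall x ltac:(lra)); pose proof (CL2_nonneg x).
      pose proof (one_sub_P_le x Hxt); pose proof (Z_le_one x Hxt).
      assert ((Z x - P x) * (1 - 3 * CL2 x) - 6 * CL2 x * P x <= 0) by nra.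
      nra. }
  assert (HPsi : Psi t1 <= 1).
  { apply (le_lim_minfty tmax _ _ t1 _ Hlim_ratio (in_dom_before t1 Ht1)); intros s Hs.
    apply Rle_trans with (Psi s); [apply Hdecr; lra|].
    pose proof (ratio_pos s (in_dom_before s ltac:(lra))); pose proof (CL2_nonneg s).
    unfold Psi; nra. }
  pose proof (Hsmall t1 ltac:(lra)); unfold Psi in HPsi.
  pose proof (ratio_pos t1 (in_dom_before t1 Ht1)); nra.
Qed.

(* Once [CL2 >= 1/4], [P <= 3/4] makes [W / Y * exp (4 V)] decrease. *)
Lemma WY_le_late t1 : t1 <= t0 -> (forall s, t1 <= s <= t0 -> 1 / 4 <= CL2 s) ->
  W t0 / Y t0 <= exp 4 * (W t1 / Y t1).
Proof.
  intros Ht1 Hlarge.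
  assert (Hdecr : W t0 / Y t0 * exp (4 * V t0) <= W t1 / Y t1 * exp (4 * V t1)).
  { apply (nonincreasing_of_deriv_nonpos (fun x => W x / Y x * exp (4 * V x))
      (fun x => W x / Y x * exp (4 * V x) * (V x * (4 * P x - 3) + 4 * (F x / dd))));
      [exact Ht1| |].
    - intros x Hx; pose proof (WY_deriv x (in_dom_before x ltac:(lra))).
      pose proof (V_deriv x (in_dom_before x ltac:(lra))).
      eapply derivable_pt_lim_eq_val; [derive|cbv beta; ring].
    - intros x Hx; assert (Hxt : x <= t0) by lra; pose proof (in_dom_before x Hxt) as Hdx.
      assert (0 < W x / Y x * exp (4 * V x))
        by (apply Rmult_lt_0_compat; [apply WY_pos, Hdx|apply exp_pos]).
      pose proof (Hlarge x Hx); pose proof (CL2_le_one_sub_P x Hxt); pose proof (V_nonneg x Hxt).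
      specialize (HF x Hxt); assert (0 < / dd) by (apply Rinv_0_lt_compat; lra).
      assert (F x / dd <= 0) by (unfold Rdiv; nra).
      assert (V x * (4 * P x - 3) <= 0) by nra.
      rewrite <- (Rmult_0_r (W x / Y x * exp (4 * V x))); apply Rmult_le_compat_l; lra. }
  pose proof (WY_pos t0 Ht0); pose proof (WY_pos t1 (in_dom_before t1 Ht1)).
  assert (1 <= exp (4 * V t0))
    by (rewrite <- exp_0; apply exp_le; pose proof V_nonneg_at_t0; lra).
  assert (exp (4 * V t1) <= exp 4).
  { apply exp_le; pose proof (Z_le_one t1 Ht1); pose proof (X_nonneg t1 Ht1); unfold V; lra. }
  nra.
Qed.

Lemma exists_switch_time : exists t1, t1 <= t0 /\ (forall s, s <= t1 -> CL2 s <= 1 / 4) /\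
  W t0 / Y t0 <= exp 4 * (W t1 / Y t1).
Proof.
  assert (1 <= exp 4) by (rewrite <- exp_0; apply exp_le; lra).
  destruct (Rle_lt_dec (CL2 t0) (1 / 4)) as [Hsmall|Hlarge].
  { exists t0; split; [lra|split].
    - intros s Hs; pose proof (CL2_nondecreasing s t0 Hs ltac:(lra)); lra.
    - pose proof (WY_pos t0 Ht0); nra. }
  set (k := C * g t0 ^ 2).
  assert (Hk : 0 <= k) by (unfold k; pose proof (pow2_ge_0 (g t0)); nra).
  set (del := Rmin 1 (1 / (4 * (k + 1)))).
  assert (Hdel0 : 0 < del) by (apply Rmin_glb_lt; [lra|apply Rdiv_lt_0_compat; lra]).
  assert (Hdel1 : del <= 1) by apply Rmin_l.
  assert (Hdel2 : (k + 1) * del <= 1 / 4).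
  { assert (Hle : del <= 1 / (4 * (k + 1))) by apply Rmin_r.
    apply (Rmult_le_compat_l (k + 1)) in Hle; [|lra].
    replace ((k + 1) * (1 / (4 * (k + 1)))) with (1 / 4) in Hle by (field; lra).
    exact Hle. }
  destruct (lim_minfty_below tmax Y 0 t0 HlimY Ht0 del Hdel0) as [M [HMt HM]].
  set (s0 := M - 1).
  assert (Hs0 : CL2 s0 - 1 / 4 < 0).
  { specialize (HM s0 ltac:(unfold s0; lra)); rewrite Rminus_0_r in HM.
    pose proof (Hg_pos s0 (in_dom_before s0 ltac:(unfold s0; lra))).
    pose proof (g_nondecreasing s0 t0 ltac:(unfold s0; lra) ltac:(lra)).
    assert (g s0 ^ 2 <= g t0 ^ 2) by (apply pow_incr; lra).
    assert (HY2 : Y s0 ^ 2 < del) by (apply Rabs_def2 in HM; nra).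
    assert (CL2 s0 <= k * Y s0 ^ 2).
    { assert (C * g s0 ^ 2 <= k) by (apply Rmult_le_compat_l; lra).
      unfold CL2; pose proof (pow2_ge_0 (Y s0)); nra. }
    pose proof (pow2_ge_0 (Y s0)); nra. }
  destruct (first_zero_crossing (fun s => CL2 s - 1 / 4) s0 t0) as [p [Hp [Hp0 _]]];
    [unfold s0; lra| |exact Hs0|lra|].
  { intros x Hx; eapply derivable_pt_lim_continuity_pt, derivable_pt_lim_minus;
      [apply CL2_deriv, in_dom_before; lra|apply derivable_pt_lim_const]. }
  exists p; split; [lra|split].
  - intros s Hs; pose proof (CL2_nondecreasing s p Hs ltac:(lra)); lra.
  - apply WY_le_late; [lra|]; intros s Hs.
    pose proof (CL2_nondecreasing p s ltac:(lra) ltac:(lra)); lra.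
Qed.

Lemma WY_sq_at_t0 : a3 * (dd + 2) * (W t0 / Y t0) ^ 2 = a2.
Proof.
  pose proof (HY_pos t0 Ht0).
  replace (a3 * (dd + 2) * (W t0 / Y t0) ^ 2) with ((dd + 2) * a3 * W t0 ^ 2 / Y t0 ^ 2)
    by (field; lra).
  replace ((dd + 2) * a3 * W t0 ^ 2) with (a2 * Y t0 ^ 2) by (unfold F in HF0; lra).
  field; lra.
Qed.

Lemma WY_sq_at_t0_small : exists t1,
  C * lambda ^ 2 * Y t1 ^ 2 <= 1 / 4 /\ (W t0 / Y t0) ^ 2 <= 16 * exp 8 * Y t1 ^ 2.
Proof.
  destruct exists_switch_time as [t1 [Ht1 [Hsmall HWY]]]; exists t1; split.
  { pose proof (CL2_ge t1 Ht1); pose proof (Hsmall t1 ltac:(lra)); lra. }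
  pose proof (ratio_le_4 t1 Ht1 Hsmall); pose proof (WY_pos t0 Ht0).
  pose proof (HY_pos t1 (in_dom_before t1 Ht1)).
  assert (W t1 / Y t1 <= 4 * Y t1).
  { replace (W t1 / Y t1) with (W t1 / Y t1 ^ 2 * Y t1) by (field; lra). nra. }
  assert (Hbound : W t0 / Y t0 <= 4 * exp 4 * Y t1) by (pose proof (exp_pos 4); nra).
  replace (exp 8) with (exp 4 * exp 4) by (rewrite <- exp_plus; f_equal; lra).
  replace (16 * (exp 4 * exp 4) * Y t1 ^ 2) with ((4 * exp 4 * Y t1) ^ 2) by ring.
  apply pow_incr; lra.
Qed.

Lemma no_first_crossing : False.
Proof.
  destruct WY_sq_at_t0_small as [t1 [HY1 Hsq]].
  pose proof (mul_gt_of_Lambda0_le dd a2 a3 _ Ha2 HLambda) as Hlarge.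
  assert (Hk : 0 < a3 * (dd + 2)) by nra.
  assert (Ha2Y : a2 <= a3 * (dd + 2) * (16 * exp 8 * Y t1 ^ 2))
    by (rewrite <- WY_sq_at_t0; apply Rmult_le_compat_l; lra).
  assert (HCl : 0 <= C * lambda ^ 2) by (pose proof (pow2_ge_0 lambda); nra).
  apply (Rmult_le_compat_r (C * lambda ^ 2)) in Ha2Y; [|exact HCl].
  assert (16 * exp 8 * (a3 * (dd + 2)) * (C * lambda ^ 2 * Y t1 ^ 2)
          <= 16 * exp 8 * (a3 * (dd + 2)) * (1 / 4))
    by (apply Rmult_le_compat_l; [pose proof (exp_pos 8); nra|lra]).
  nra.
Qed.

End Before_first_crossing.

Lemma F_nonpos t : in_dom tmax t -> F t <= 0.
Proof.
  intros Ht; apply Rnot_lt_le; intros Hpos.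
  destruct (F_neg_eventually t Ht) as [M [HMt HM]].
  destruct (first_zero_crossing F (M - 1) t) as [p [Hp [Hp0 Hbelow]]]; [lra| |apply HM; lra|lra|].
  { intros x Hx; eapply derivable_pt_lim_continuity_pt, F_deriv, (in_dom_le tmax x t Ht); lra. }
  apply (no_first_crossing p); [apply (in_dom_le tmax p t Ht); lra| |exact Hp0].
  intros s Hs; destruct (Rlt_le_dec s (M - 1)); [left; apply HM; lra|].
  destruct (Req_dec s p) as [->|]; [lra|left; apply Hbelow; lra].
Qed.

Lemma ratio_sq_bound t : in_dom tmax t -> W t ^ 2 / Y t ^ 2 <= a2 / (a3 * (dd + 2)).
Proof.
  intros Ht; pose proof (F_nonpos t Ht) as HFt; unfold F in HFt.
  pose proof (HY_pos t Ht); assert (0 < Y t ^ 2) by (apply pow_lt; lra).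
  assert (0 < a3 * (dd + 2)) by nra.
  apply (Rmult_le_reg_r (Y t ^ 2 * (a3 * (dd + 2)))); [nra|].
  replace (W t ^ 2 / Y t ^ 2 * (Y t ^ 2 * (a3 * (dd + 2)))) with ((dd + 2) * a3 * W t ^ 2)
    by (field; lra).
  replace (a2 / (a3 * (dd + 2)) * (Y t ^ 2 * (a3 * (dd + 2)))) with (a2 * Y t ^ 2) by (field; lra).
  lra.
Qed.

End System.

Theorem theorem5p3 :
  forall (d : nat) (q : R), (2 <= d)%nat -> q <> 0 ->
  exists Lambda0 : R, 0 < Lambda0 /\
  forall (tmax : option R) (X Y Z W g : R -> R) (C lambda : R),
    solves_S d q tmax X Y Z W ->
    (forall t, in_dom tmax t -> 0 < g t /\ derivable_pt_lim g t (g t * X t)) ->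
    (forall t, in_dom tmax t ->
       INR d * X t ^ 2 + A2 d * Y t ^ 2 + Z t ^ 2 - A3 (INR d) q * W t ^ 2
       = 1 - C * (g t * Y t) ^ 2) ->
    (forall t, in_dom tmax t -> 0 < Y t /\ 0 < W t) ->
    lim_minfty tmax X 0 -> lim_minfty tmax Y 0 ->
    lim_minfty tmax Z 1 -> lim_minfty tmax W 0 ->
    0 < C ->
    lim_minfty tmax (fun t => W t / Y t ^ 2) 1 ->
    lim_minfty tmax g lambda -> 0 < lambda ->
    Lambda0 <= C * lambda ^ 2 ->
    forall t, in_dom tmax t ->
      W t ^ 2 / Y t ^ 2 <= A2 d / (A3 (INR d) q * (INR d + 2)).
Proof.
  intros d q Hd Hq.
  assert (Hdd : 2 <= INR d) by (apply (le_INR 2); exact Hd).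
  assert (Ha2 : 0 < A2 d) by (unfold A2; nra).
  assert (Ha3 : 0 < A3 (INR d) q).
  { unfold A3; assert (0 < q ^ 2) by (rewrite <- Rsqr_pow2; apply Rsqr_pos_lt; exact Hq). nra. }
  exists (Lambda0 (INR d) (A2 d) (A3 (INR d) q)); split.
  - apply (Rlt_le_trans _ _ _ Ha2), a2_le_Lambda0; nra.
  - intros tmax X Y Z W g C lambda HS Hg HFI HYW HlimX HlimY _ _ HC Hlim_ratio Hlimg _ HLambda.
    apply (ratio_sq_bound (INR d) (A2 d) (A3 (INR d) q) C lambda tmax X Y Z W g); auto;
      intros s Hs.
    all: destruct (HS s Hs) as (HX' & HY' & HZ' & HW'); destruct (Hg s Hs); destruct (HYW s Hs);
      first [assumption | exact (HFI s Hs)].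
Qed.
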